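(* Consider the following regulation game. A random triple $(\theta,s,d)$ (agent type, training state, deployment state) has joint distribution $\pi$. Prediction functions are vectors $f\in\mathbb{R}^n$. Given $s$ (and $\theta$), expected agent utility and expected principal welfare are $\overline{U}_\theta(f;s) = -(f-\bar u)'\overline{\Omega}_U(f-\bar u)$ and $\overline{W}(f;s) = -(f-\bar w)'\overline{\Omega}_W(f-\bar w)$ with $\bar u=\bar u(s,\theta)$, $\bar w=\bar w(s)\in\mathbb{R}^n$. The principal first (knowing only $\pi$) chooses a linear explainer, i.e. a $k\times n$ real matrix $\mathcal{E}$ ($k<n$), and possibly an ex-ante restriction $\mathcal{F}=\{f\in\mathbb{R}^n: Af=a\}$ with $A\in\mathbb{R}^{m\times n}$, $a\in\mathbb{R}^m$ not depending on $s$ or $\theta$; she then, after observing $s$, dictates the value of the explanation $\mathcal{E}f=e(s)$ (a failed audit has infinite cost to the agent). The agent, knowing $\theta$ and $s$, chooses $f$ maximizing $\overline{U}_\theta(f;s)$ subject to $Af=a$ and $\mathcal{E}f=e(s)$. The principal chooses her instruments to maximize $\mathop{E}_\pi[\overline{W}(f;s)]$. A restriction is called fully explainable if, together with the explainer, it determines $f$ completely (i.e. $f$ is restricted to a $k$-dimensional space on which $\mathcal{E}$ is fully informative, e.g. $A$ of rank $n-k$). Assume $\overline{\Omega}_U=\overline{\Omega}_W$ and both are constant (non-random) and positive definite almost surely. If $\operatorname{Var}_\pi(\bar w) \succ \mathop{E}_\pi[(\bar u-\bar w)(\bar u-\bar w)']$ (in the positive definite order), then restricting the agent to fully explainable functions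 is never optimal for any $k<n$; indeed it is dominated (in expected welfare) by not restricting the agent ex-ante at all.
   Context: $\succ$ denotes the order on symmetric matrices given by positive definiteness of the difference. *)

From HB Require Import structures.
From mathcomp Require Import all_boot all_order all_algebra.
From mathcomp Require Import all_classical all_reals all_analysis.
Set Implicit Arguments. Unset Strict Implicit. Unset Printing Implicit Defensive.
Import Order.TTheory GRing.Theory Num.Theory.
Import numFieldNormedType.Exports.
Local Open Scope classical_set_scope.
Local Open Scope ring_scope.

Section Defs.
Context {R : realType}.

Definition qform {n} (M : 'M[R]_n) (x : 'cV[R]_n) : R := (x^T *m M *m x) 0 0.

Definition posdef {n} (M : 'M[R]_n) : Prop :=
  M^T = M /\ forall x : 'cV[R]_n, x != 0 -> 0 < qform M x.

Definition mx_succ {n} (A B : 'M[R]_n) : Prop := posdef (A - B).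

Definition quadpay {n} (Om : 'M[R]_n) (f c : 'cV[R]_n) : R := - qform Om (f - c).

(* Restriction {f | A f = a} is fully explainable for the explainer E:
   it is a (nonempty) k-dimensional affine space (rank A = n - k) on which
   E is fully informative (injective on its direction ker A). *)
Definition fully_explainable {n k m} (E : 'M[R]_(k, n)) (A : 'M[R]_(m, n))
    (a : 'cV[R]_m) : Prop :=
  (exists f : 'cV[R]_n, A *m f = a) /\ \rank A = (n - k)%N /\
  (forall x : 'cV[R]_n, A *m x = 0 -> E *m x = 0 -> x = 0).

Definition agent_best {n k m} (Om : 'M[R]_n) (A : 'M[R]_(m, n)) (a : 'cV[R]_m)
    (E : 'M[R]_(k, n)) (e : 'cV[R]_k) (ubar f : 'cV[R]_n) : Prop :=
  A *m f = a /\ E *m f = e /\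
  forall g, A *m g = a -> E *m g = e -> quadpay Om g ubar <= quadpay Om f ubar.

Definition agent_best_free {n k} (Om : 'M[R]_n)
    (E : 'M[R]_(k, n)) (e : 'cV[R]_k) (ubar f : 'cV[R]_n) : Prop :=
  E *m f = e /\ forall g, E *m g = e -> quadpay Om g ubar <= quadpay Om f ubar.

Context {d : measure_display} {T : measurableType d}.

Definition mvec {n} (X : T -> 'cV[R]_n) : Prop :=
  forall i, measurable_fun setT (fun x => X x i 0).

Definition sq_integrable (P : probability T R) {n} (X : T -> 'cV[R]_n) : Prop :=
  forall i, measurable_fun setT (fun x => X x i 0) /\
            P.-integrable setT (fun x => ((X x i 0) ^+ 2)%:E).

Definition Emx (P : probability T R) {p q} (X : T -> 'M[R]_(p, q)) : 'M[R]_(p, q) :=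
  \matrix_(i, j) (\int[P]_x (X x i j)).

Definition Varmx (P : probability T R) {n} (X : T -> 'cV[R]_n) : 'M[R]_n :=
  Emx P (fun x => (X x - Emx P X) *m (X x - Emx P X)^T).

Definition welfare (P : probability T R) {n} (Om : 'M[R]_n)
    (f w : T -> 'cV[R]_n) : \bar R :=
  (\int[P]_x (quadpay Om (f x) (w x))%:E)%E.

End Defs.

From HB Require Import structures.
From mathcomp Require Import all_boot all_order all_algebra.
From mathcomp Require Import all_classical all_reals all_analysis.
From mathcomp Require Import ring lra measurable_realfun.
Set Implicit Arguments. Unset Strict Implicit. Unset Printing Implicit Defensive.
Import Order.TTheory GRing.Theory Num.Theory.
Local Open Scope ring_scope.

(* Let the columns of B span ker A, of dimension k.  Instead of restricting the
   agent, audit the explainer E' = B' Om with target E' wbar(s): the agent's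
   unrestricted best response is then wbar + Pi (ubar - wbar), where Pi is the
   Om-orthogonal projection onto ker E' along range B, so the welfare loss is
   Q(ubar - wbar) with Q = Pi' Om Pi.  Under the fully explainable restriction
   every admissible f differs from a fixed v0 by an element of range B, hence
   Pi f = Pi v0 and the loss is at least Q(v0 - wbar).  In expectation,
   E[Q(v0 - wbar)] = tr(Q Var wbar) + Q(v0 - E wbar) and
   E[Q(ubar - wbar)] = tr(Q E[(ubar - wbar)(ubar - wbar)']); the difference is
   positive because tr(Q D) > 0 for positive definite D and the nonzero positive
   semidefinite Q (k < n), which is a sum of rank-one matrices c c'. *)

Section Kernel.
Variable F : fieldType.

Lemma rank_ker_basis n k m (A : 'M[F]_(m, n)) : (k <= n)%N -> \rank A = (n - k)%N ->
  exists B : 'M[F]_(n, k), (forall y : 'cV_k, B *m y = 0 -> y = 0) /\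
    (forall x : 'cV_n, A *m x = 0 -> exists y, x = B *m y).
Proof.
move=> kn rankA; set K := kermx A^T.
have rankK : \rank K = k by rewrite mxrank_ker mxrank_tr rankA subKn.
have := eq_row_base K; have := row_base_free K; move: (row_base K).
rewrite rankK => Bt Bt_free eqBtK; exists Bt^T; split.
- move=> y /(congr1 trmx); rewrite trmx_mul trmxK trmx0 => /eqP.
  by rewrite mulmx_free_eq0 // trmx_eq0 => /eqP.
- move=> x Ax0; have : (x^T <= Bt)%MS by rewrite eqBtK sub_kermx -trmx_mul Ax0 trmx0.
  by case/submxP => D xD; exists D^T; rewrite -[x]trmxK xD trmx_mul.
Qed.

Lemma ker_neq0 k n (E : 'M[F]_(k, n)) : (k < n)%N ->
  exists2 z : 'cV[F]_n, z != 0 & E *m z = 0.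
Proof.
move=> kn; have : kermx E^T != 0.
  rewrite -mxrank_eq0 mxrank_ker mxrank_tr -lt0n subn_gt0.
  exact: leq_ltn_trans (rank_leq_row E) kn.
case/rowV0Pn => v /sub_kermxP vE v0; exists v^T; first by rewrite trmx_eq0.
by rewrite -[E]trmxK -trmx_mul vE trmx0.
Qed.

End Kernel.

Section QuadraticForms.
Variable R : realType.

Definition bform {n} (M : 'M[R]_n) (x y : 'cV[R]_n) : R := (x^T *m M *m y) 0 0.

Definition psd {n} (M : 'M[R]_n) := forall x, 0 <= qform M x.

Lemma posdef_psd n (M : 'M[R]_n) : posdef M -> psd M.
Proof.
move=> [_ pM] x; have [->|/pM/ltW//] := eqVneq x 0.
by rewrite /qform mulmx0 mxE.
Qed.

Lemma posdef_qform_eq0 n (M : 'M[R]_n) x : posdef M -> qform M x = 0 -> x = 0.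
Proof. by move=> [_ pM] Mx0; apply: contra_eq Mx0 => /pM/gt_eqF->. Qed.

Lemma bformZr n (M : 'M[R]_n) a x y : bform M x (a *: y) = a * bform M x y.
Proof. by rewrite /bform -scalemxAr mxE. Qed.

Lemma bform_delta n (M : 'M[R]_n) i j :
  bform M (delta_mx i 0) (delta_mx j 0) = M i j.
Proof. by rewrite /bform trmx_delta -rowE -colE !mxE. Qed.

Lemma qform_delta n (M : 'M[R]_n) i : qform M (delta_mx i 0) = M i i.
Proof. exact: bform_delta. Qed.

Lemma bform_deltar n (M : 'M[R]_n) x i :
  bform M x (delta_mx i 0) = (x^T *m col i M) 0 0.
Proof. by rewrite /bform colE mulmxA. Qed.

Lemma bformDl n (M : 'M[R]_n) x y z : bform M (x + y) z = bform M x z + bform M y z.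
Proof. by rewrite /bform linearD /= !mulmxDl mxE. Qed.

Lemma bformDr n (M : 'M[R]_n) x y z : bform M z (x + y) = bform M z x + bform M z y.
Proof. by rewrite /bform mulmxDr mxE. Qed.

Lemma bformC n (M : 'M[R]_n) x y : M^T = M -> bform M x y = bform M y x.
Proof.
move=> MT; rewrite /bform -[in LHS](trmxK (x^T *m M *m y)) mxE.
by rewrite !trmx_mul trmxK MT mulmxA.
Qed.

Lemma qformD n (M : 'M[R]_n) x y : M^T = M ->
  qform M (x + y) = qform M x + 2 * bform M x y + qform M y.
Proof.
move=> MT; rewrite [LHS]bformDl !bformDr (bformC y x MT).
rewrite /qform /bform; ring.
Qed.

Lemma qformZ n (M : 'M[R]_n) a x : qform M (a *: x) = a ^+ 2 * qform M x.
Proof.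
by rewrite /qform -scalemxAr [(a *: x)^T]linearZ /= -!scalemxAl !mxE mulrA -expr2.
Qed.

Lemma mxBE m n (M N : 'M[R]_(m, n)) i j : (M - N) i j = M i j - N i j.
Proof. by rewrite !mxE. Qed.

Lemma qform_mxB n (M N : 'M[R]_n) x : qform (M - N) x = qform M x - qform N x.
Proof. by rewrite /qform mulmxBr mulmxBl mxBE. Qed.

Lemma outer_mxE n (x y : 'cV[R]_n) i j : (x *m y^T) i j = x i 0 * y j 0.
Proof. by rewrite mxE big_ord1 mxE. Qed.

Lemma qform_outer n (c x : 'cV[R]_n) : qform (c *m c^T) x = (x^T *m c) 0 0 ^+ 2.
Proof.
rewrite /qform !mulmxA -(mulmxA _ c^T) mxE big_ord1 expr2; congr (_ * _).
by rewrite -[c^T *m x]trmxK trmx_mul trmxK mxE.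
Qed.

Lemma qform_mxtrace n (M : 'M[R]_n) x : qform M x = \tr (M *m (x *m x^T)).
Proof.
by rewrite mulmxA mxtrace_mulC /qform mulmxA /mxtrace big_ord1.
Qed.

Lemma mxtrace_mulE n (A B : 'M[R]_n) : \tr (A *m B) = \sum_i \sum_j A i j * B j i.
Proof. by apply: eq_bigr => i _; rewrite mxE. Qed.

Lemma psd_row_eq0 n (C : 'M[R]_n) i j : C^T = C -> psd C -> C i i = 0 -> C i j = 0.
Proof.
move=> CT psdC Cii; have -> : C i j = C j i by rewrite -[in LHS]CT mxE.
apply/eqP; apply: contraT => Cji.
pose t := - (C j j + 1) / (2 * C j i).
have := psdC (delta_mx j 0 + t *: delta_mx i 0).
rewrite qformD // qformZ bformZr bform_delta !qform_delta Cii mulr0.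
have -> : 2 * (t * C j i) = - (C j j + 1) by rewrite /t; field.
lra.
Qed.

Definition pivot_col {n} (C : 'M[R]_n) i : 'cV[R]_n := (Num.sqrt (C i i))^-1 *: col i C.

Lemma pivot_outerE n (C : 'M[R]_n) i a b : 0 <= C i i ->
  (pivot_col C i *m (pivot_col C i)^T) a b = C a i * C b i / C i i.
Proof.
move=> Cii; rewrite outer_mxE !mxE mulrACA -expr2 exprVn sqr_sqrtr //.
by rewrite mulrC.
Qed.

Lemma psd_sub_pivot n (C : 'M[R]_n) i : C^T = C -> psd C -> 0 < C i i ->
  psd (C - pivot_col C i *m (pivot_col C i)^T).
Proof.
move=> CT psdC Cii x; set s := (x^T *m col i C) 0 0.
have -> : qform (C - pivot_col C i *m (pivot_col C i)^T) x = qform C x - s ^+ 2 / C i i.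
  rewrite qform_mxB qform_outer /pivot_col -scalemxAr mxE -/s exprMn exprVn.
  by rewrite sqr_sqrtr ?ltW // mulrC.
have := psdC (x + (- s / C i i) *: delta_mx i 0).
rewrite qformD // qformZ bformZr bform_deltar -/s qform_delta -addrA.
have -> // : 2 * (- s / C i i * s) + (- s / C i i) ^+ 2 * C i i = - (s ^+ 2 / C i i).
by field; rewrite gt_eqF.
Qed.

Lemma psd_sum_outer n (C : 'M[R]_n) : C^T = C -> psd C ->
  exists cs : seq 'cV[R]_n, C = \sum_(c <- cs) c *m c^T.
Proof.
have [N] := ubnP #|[set i | C i i != 0]|; elim: N C => // N IH C.
rewrite ltnS => sizeC CT psdC.
have [diag0 | [i]] := set_0Vmem [set i | C i i != 0].
  exists [::]; rewrite big_nil; apply/matrixP => a b; rewrite mxE.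
  have : a \notin [set i | C i i != 0] by rewrite diag0 inE.
  by rewrite inE negbK => /eqP; apply: psd_row_eq0.
rewrite inE => Cii0; have Cii : 0 < C i i by rewrite lt0r Cii0 -qform_delta psdC.
set c := pivot_col C i; set C' := C - c *m c^T.
have C'T : C'^T = C' by rewrite /C' linearB /= trmx_mul trmxK CT.
have C'E j : C' j j = C j j - C j i ^+ 2 / C i i.
  by rewrite mxBE pivot_outerE ?ltW // expr2.
have shrink : [set j | C' j j != 0] \proper [set j | C j j != 0].
  apply/properP; split.
    apply/fintype.subsetP => j; rewrite !inE; apply: contraNN => /eqP Cjj.
    by rewrite C'E Cjj psd_row_eq0 // expr0n /= mul0r subrr.
  exists i; rewrite !inE ?Cii0 // negbK C'E expr2 mulfK ?subrr //.
have [cs C'cs] := IH C' (leq_trans (proper_card shrink) sizeC) C'T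
  (psd_sub_pivot CT psdC Cii).
by exists (c :: cs); rewrite big_cons -C'cs /C' addrC subrK.
Qed.

Lemma mxtrace_mul_psd_gt0 n (C D : 'M[R]_n) :
  posdef D -> C^T = C -> psd C -> C != 0 -> 0 < \tr (C *m D).
Proof.
move=> pdD CT psdC C0; have [cs Ccs] := psd_sum_outer CT psdC.
have -> : \tr (C *m D) = \sum_(c <- cs) qform D c.
  rewrite Ccs mulmx_suml raddf_sum; apply: eq_bigr => c _.
  by rewrite /= mxtrace_mulC qform_mxtrace.
have qD_ge0 c : 0 <= qform D c by exact: posdef_psd.
rewrite lt_def sumr_ge0 // andbT; apply: contra C0; rewrite psumr_eq0 // => /allP qD0.
rewrite Ccs big1_seq // => c /andP[_ /qD0 /eqP /(posdef_qform_eq0 pdD) ->].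
by rewrite mul0mx.
Qed.

End QuadraticForms.


Section Projection.
Variables (R : realType) (n k : nat) (Om : 'M[R]_n) (B : 'M[R]_(n, k)).
Hypothesis pdOm : posdef Om.
Hypothesis B_inj : forall y : 'cV[R]_k, B *m y = 0 -> y = 0.

Implicit Types (u w x z : 'cV[R]_n) (y : 'cV[R]_k).

Let OmT : Om^T = Om. Proof. by case: pdOm. Qed.

Definition gramB := B^T *m Om *m B.
Definition explB := B^T *m Om.
Definition projB := 1%:M - B *m invmx gramB *m explB.
Definition lossB := projB^T *m Om *m projB.

Lemma gramB_unit : gramB \in unitmx.
Proof.
rewrite -row_free_unit -kermx_eq0; apply/eqP/row_matrixP => i; rewrite row0.
set r := row i _; have r_gram : r *m gramB = 0 by rewrite -row_mul mulmx_ker row0.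
suff : B *m r^T = 0 by move/B_inj/(congr1 trmx); rewrite trmxK trmx0.
apply: (posdef_qform_eq0 pdOm); rewrite /qform.
have -> : (B *m r^T)^T *m Om *m (B *m r^T) = r *m gramB *m r^T.
  by rewrite trmx_mul trmxK /gramB !mulmxA.
by rewrite r_gram mul0mx mxE.
Qed.

Lemma explB_projB : explB *m projB = 0.
Proof.
by rewrite /projB mulmxBr mulmx1 !mulmxA -/gramB mulmxV ?gramB_unit // mul1mx subrr.
Qed.

Lemma projB_B : projB *m B = 0.
Proof.
rewrite /projB mulmxBl mul1mx -(mulmxA _ explB) -[explB *m B]/gramB -mulmxA.
by rewrite mulVmx ?gramB_unit // mulmx1 subrr.
Qed.

Lemma projB_id z : explB *m z = 0 -> projB *m z = z.
Proof. by move=> z0; rewrite /projB mulmxBl mul1mx -(mulmxA _ explB) z0 mulmx0 subr0. Qed.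

Lemma subr_projB x : x - projB *m x = B *m (invmx gramB *m explB *m x).
Proof. by rewrite /projB mulmxBl mul1mx opprB addrC subrK !mulmxA. Qed.

Lemma qform_explB_pythagoras z y : explB *m z = 0 ->
  qform Om (z + B *m y) = qform Om z + qform Om (B *m y).
Proof.
move=> z0; rewrite qformD // /bform mulmxA.
have -> : z^T *m Om *m B = (explB *m z)^T by rewrite !trmx_mul trmxK OmT mulmxA.
by rewrite z0 trmx0 mul0mx mxE mulr0 addr0.
Qed.

Lemma qform_projB_le x : qform Om (projB *m x) <= qform Om x.
Proof.
have xE : x = projB *m x + B *m (invmx gramB *m explB *m x).
  by rewrite -subr_projB addrC subrK.
rewrite {2}xE qform_explB_pythagoras ?lerDl ?posdef_psd //.
by rewrite mulmxA explB_projB mul0mx.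
Qed.

Lemma qform_projB x : qform Om (projB *m x) = qform lossB x.
Proof. by rewrite /qform /lossB trmx_mul !mulmxA. Qed.

Lemma agent_best_freeP u w f :
  agent_best_free Om explB (explB *m w) u f <-> f = w + projB *m (u - w).
Proof.
set fs := w + projB *m (u - w).
have explB_fs : explB *m fs = explB *m w.
  by rewrite mulmxDr mulmxA explB_projB mul0mx addr0.
have fs_u : fs - u = B *m - (invmx gramB *m explB *m (u - w)).
  by rewrite mulmxN -subr_projB !opprB /fs addrCA addrA.
have pyth g : explB *m g = explB *m w ->
    qform Om (g - u) = qform Om (g - fs) + qform Om (fs - u).
  move=> gw; have -> : g - u = (g - fs) + (fs - u) by rewrite addrA subrK.
  by rewrite fs_u qform_explB_pythagoras // mulmxBr gw explB_fs subrr.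
split=> [[f_expl f_opt] | ->].
  have := f_opt fs explB_fs; rewrite /quadpay lerN2 pyth // gerDr => fs_le.
  apply/eqP; rewrite -subr_eq0; apply/eqP/(posdef_qform_eq0 pdOm)/le_anti.
  by rewrite fs_le posdef_psd.
by split=> // g gw; rewrite /quadpay lerN2 (pyth g gw) lerDr posdef_psd.
Qed.

Lemma qform_lossB_le_restricted m (A : 'M[R]_(m, n)) a v0 f w :
  (forall x, A *m x = 0 -> exists y, x = B *m y) -> A *m v0 = a -> A *m f = a ->
  qform lossB (v0 - w) <= qform Om (f - w).
Proof.
move=> kerA Av0 Af; have [y fv0] : exists y, f - v0 = B *m y.
  by apply: kerA; rewrite mulmxBr Av0 Af subrr.
have projB_f : projB *m f = projB *m v0.
  by apply/eqP; rewrite -subr_eq0 -mulmxBr fv0 mulmxA projB_B mul0mx.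
by rewrite -qform_projB mulmxBr -projB_f -mulmxBr qform_projB_le.
Qed.

Lemma lossB_sym : lossB^T = lossB.
Proof. by rewrite /lossB !trmx_mul trmxK OmT mulmxA. Qed.

Lemma lossB_psd : psd lossB.
Proof. by move=> x; rewrite -qform_projB posdef_psd. Qed.

Lemma lossB_neq0 : (k < n)%N -> lossB != 0.
Proof.
move=> kn; have [z z0 explBz] := ker_neq0 explB kn.
apply: contra_neq z0 => loss0; apply: (posdef_qform_eq0 pdOm).
by rewrite -(projB_id explBz) qform_projB loss0 /qform mulmx0 mul0mx mxE.
Qed.

Lemma quadpay_agent_best_free u w f :
  agent_best_free Om explB (explB *m w) u f -> quadpay Om f w = - qform lossB (u - w).
Proof. by move/agent_best_freeP->; rewrite /quadpay addrAC subrr add0r qform_projB. Qed.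

End Projection.

Lemma mvec_mulmx {R : realType} {d : measure_display} {T : measurableType d} m n
    (M : 'M[R]_(m, n)) (X : T -> 'cV[R]_n) :
  mvec X -> mvec (fun x => M *m X x).
Proof.
move=> mX i; under eq_fun do rewrite mxE.
by apply: measurable_sum => j; apply: measurable_funM.
Qed.

Section Integrals.
Context {d : measure_display} {T : measurableType d} {R : realType}.
Variable mu : {measure set T -> \bar R}.
Local Open Scope ereal_scope.

(* No measurability is needed, the integral of a nonnegative function being a
   supremum over the simple functions below it; the agent's responses are not
   assumed measurable. *)
Lemma ge0_le_integral_nomeas (F G : T -> \bar R) :
  (forall x, 0 <= F x) -> (forall x, F x <= G x) ->
  \int[mu]_x F x <= \int[mu]_x G x.
Proof.
move=> F0 FG; rewrite !ge0_integralTE // => [|x]; last exact: le_trans (FG x).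
apply: ereal_sup_le => _ [h hF <-]; exists h => //= x.
exact: le_trans (hF x) (FG x).
Qed.

Lemma EFin_Rintegral (f : T -> R) : mu.-integrable setT (EFin \o f) ->
  (\int[mu]_x f x)%:E = \int[mu]_x (f x)%:E.
Proof. by move=> fint; rewrite fineK // (integrable_fin_num measurableT fint). Qed.

End Integrals.

Section SecondMoments.
Context {R : realType} {d : measure_display} {T : measurableType d}.
Variable P : probability T R.

Lemma sq_integrableP n (X : T -> 'cV[R]_n) :
  sq_integrable P X <-> forall i, (fun x => X x i 0) \in Lfun P 2%:E.
Proof.
split=> [X2 i | X2 i].
  have [mX iX2] := X2 i; rewrite inE; apply/andP; split; rewrite inE //=.
  rewrite /finite_norm unlock /Lnorm poweR_lty //.
  move/integrableP: iX2 => [_]; apply: le_lt_trans; rewrite le_eqVlt; apply/orP; left.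
  apply/eqP/eq_integral => x _ /=.
  by rewrite powR_mulrn ?normr_ge0 // real_normK ?num_real // ger0_norm ?sqr_ge0.
split; last exact: Lfun2_integrable_sqr.
by move: (X2 i); rewrite inE => /andP[/[!inE]].
Qed.

Lemma sq_integrableB n (X Y : T -> 'cV[R]_n) :
  sq_integrable P X -> sq_integrable P Y -> sq_integrable P (fun x => X x - Y x).
Proof.
move=> /sq_integrableP X2 /sq_integrableP Y2; apply/sq_integrableP => i.
have -> : (fun x => (X x - Y x) i 0) = (fun x => X x i 0) - (fun x => Y x i 0).
  by apply/funext => x; rewrite !mxE.
by rewrite rpredB ?lee1n.
Qed.

Lemma sq_integrable_cst n (v : 'cV[R]_n) : sq_integrable P (fun=> v).
Proof. by apply/sq_integrableP => i; exact: Lfun_cst. Qed.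

Lemma Lfun1_entryM n (X Y : T -> 'cV[R]_n) i j :
  sq_integrable P X -> sq_integrable P Y ->
  (fun x => X x i 0 * Y x j 0) \in Lfun P 1.
Proof. by move=> /sq_integrableP X2 /sq_integrableP Y2; exact: Lfun2_mul_Lfun1. Qed.

Lemma Lfun1_entry n (X : T -> 'cV[R]_n) i :
  sq_integrable P X -> (fun x => X x i 0) \in Lfun P 1.
Proof.
by move=> /sq_integrableP X2; apply: Lfun_subset12 (X2 i); rewrite /= probability_setT.
Qed.

Lemma Lfun1D (f g : T -> R) : f \in Lfun P 1 -> g \in Lfun P 1 ->
  (fun x => f x + g x) \in Lfun P 1.
Proof. exact: rpredD. Qed.

Lemma Lfun1B (f g : T -> R) : f \in Lfun P 1 -> g \in Lfun P 1 ->
  (fun x => f x - g x) \in Lfun P 1.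
Proof. exact: rpredB. Qed.

Lemma Lfun1Z (c : R) (f : T -> R) : f \in Lfun P 1 -> (fun x => c * f x) \in Lfun P 1.
Proof. exact: rpredZ. Qed.

Lemma prob_Rintegral_cst (c : R) : \int[P]_x c = c.
Proof. by rewrite Rintegral_cst //= probability_setT mulr1. Qed.

Lemma Rintegral_sum (I : Type) (r : seq I) (F : I -> T -> R) :
  (forall i, F i \in Lfun P 1) ->
  \int[P]_x (\sum_(i <- r) F i x) = \sum_(i <- r) \int[P]_x F i x.
Proof.
move=> F1; elim: r => [|i r IH].
  by under eq_Rintegral do rewrite big_nil; rewrite prob_Rintegral_cst big_nil.
under eq_Rintegral do rewrite big_cons; rewrite RintegralD // ?big_cons ?IH //.
  exact/Lfun1_integrable.
by apply/Lfun1_integrable; rewrite -fct_sumE rpred_sum.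
Qed.

Lemma Rintegral_mxtrace_mul n (Q : 'M[R]_n) (M : T -> 'M[R]_n) :
  (forall i j, (fun x => M x i j) \in Lfun P 1) ->
  \int[P]_x \tr (Q *m M x) = \tr (Q *m Emx P M).
Proof.
move=> M1; under eq_Rintegral do rewrite mxtrace_mulE.
have QM1 i j := Lfun1Z (Q i j) (M1 j i).
rewrite mxtrace_mulE Rintegral_sum => [|i]; last by rewrite -fct_sumE rpred_sum.
apply: eq_bigr => i _; rewrite Rintegral_sum //.
apply: eq_bigr => j _; rewrite mxE RintegralZl //; exact/Lfun1_integrable.
Qed.

Lemma Rintegral_qform n (Q : 'M[R]_n) (X : T -> 'cV[R]_n) : sq_integrable P X ->
  \int[P]_x qform Q (X x) = \tr (Q *m Emx P (fun x => X x *m (X x)^T)).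
Proof.
move=> X2; under eq_Rintegral do rewrite qform_mxtrace.
apply: Rintegral_mxtrace_mul => i j.
by under eq_fun do rewrite outer_mxE; exact: Lfun1_entryM.
Qed.

Lemma Emx_outer_shift n (X : T -> 'cV[R]_n) (v : 'cV[R]_n) : sq_integrable P X ->
  Emx P (fun x => (v - X x) *m (v - X x)^T) =
  Varmx P X + (v - Emx P X) *m (v - Emx P X)^T.
Proof.
move=> X2; set m := Emx P X; apply/matrixP => i j.
have Y2 := sq_integrableB X2 (sq_integrable_cst m).
have EY l : \int[P]_x (X x - m) l 0 = 0.
  under eq_Rintegral do rewrite !mxE.
  rewrite RintegralB ?prob_Rintegral_cst ?mxE ?subrr //.
    exact/Lfun1_integrable/Lfun1_entry.
  exact/Lfun1_integrable/Lfun_cst.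
set a := (v - m) i 0; set b := (v - m) j 0.
rewrite mxE [in RHS]mxE outer_mxE /Varmx mxE.
under eq_Rintegral do rewrite outer_mxE.
under [in RHS]eq_Rintegral do rewrite outer_mxE.
transitivity (\int[P]_x ((X x - m) i 0 * (X x - m) j 0 + a * (b - (X x - m) j 0)
                         - b * (X x - m) i 0)).
  by apply: eq_Rintegral => x _; rewrite /a /b !mxE; ring.
have Y1 l : (fun x => (X x - m) l 0) \in Lfun P 1 by exact: Lfun1_entry.
have L1 := Lfun1_entryM i j Y2 Y2.
rewrite RintegralB ?RintegralD ?RintegralZl ?RintegralB ?EY ?prob_Rintegral_cst //.
  by rewrite !mulr0 !subr0.
all: apply/Lfun1_integrable.
all: do ?[exact: Y1 | exact: L1 | apply: Lfun1B | apply: Lfun1D | apply: Lfun1Z |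
          apply: Lfun_cst].
Qed.

Lemma Lfun1_qform n (Q : 'M[R]_n) (X : T -> 'cV[R]_n) :
  sq_integrable P X -> (fun x => qform Q (X x)) \in Lfun P 1.
Proof.
move=> X2; under eq_fun do rewrite qform_mxtrace mxtrace_mulE.
rewrite -fct_sumE rpred_sum // => i _; rewrite -fct_sumE rpred_sum // => j _.
by under eq_fun do rewrite outer_mxE; apply/Lfun1Z/Lfun1_entryM.
Qed.

Lemma Rintegral_qform_lt n (Q : 'M[R]_n) (X Y : T -> 'cV[R]_n) (v : 'cV[R]_n) :
  Q^T = Q -> psd Q -> Q != 0 -> sq_integrable P X -> sq_integrable P Y ->
  mx_succ (Varmx P X) (Emx P (fun x => Y x *m (Y x)^T)) ->
  \int[P]_x qform Q (Y x) < \int[P]_x qform Q (v - X x).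
Proof.
move=> QT psdQ Q0 X2 Y2 VM.
have vX2 := sq_integrableB (sq_integrable_cst v) X2.
rewrite !Rintegral_qform //.
have -> : Emx P (fun x => (v - X x) *m (v - X x)^T) = _ := Emx_outer_shift v X2.
rewrite mulmxDr mxtraceD -qform_mxtrace; apply: ltr_wpDr; first exact: psdQ.
by rewrite -subr_gt0 -raddfB /= -mulmxBr mxtrace_mul_psd_gt0.
Qed.

End SecondMoments.

Section Welfare.
Context {R : realType} {d : measure_display} {T : measurableType d}.
Variables (P : probability T R) (n : nat) (Om : 'M[R]_n) (f W : T -> 'cV[R]_n).
Variable g : T -> R.
Hypotheses (g_ge0 : forall x, 0 <= g x) (g_int : P.-integrable setT (EFin \o g)).
Local Open Scope ereal_scope.

Lemma welfare_le : (forall x, g x <= qform Om (f x - W x))%R ->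
  welfare P Om f W <= - (\int[P]_x g x)%:E.
Proof.
move=> g_le; rewrite /welfare; under eq_integral do rewrite /quadpay EFinN.
rewrite integral_ge0N => [|x _]; last by rewrite lee_fin (le_trans (g_ge0 x)).
by rewrite leeN2 EFin_Rintegral // ge0_le_integral_nomeas // => x; rewrite lee_fin.
Qed.

Lemma welfareE : (forall x, quadpay Om (f x) (W x) = - g x)%R ->
  welfare P Om f W = - (\int[P]_x g x)%:E.
Proof.
move=> fg; rewrite /welfare; under eq_integral do rewrite fg EFinN.
by rewrite integral_ge0N ?EFin_Rintegral // => x _; rewrite lee_fin.
Qed.

End Welfare.

Theorem mainTheorem2 (R : realType) (d : measure_display) (T : measurableType d)
  (P : probability T R) (S Theta : Type) (n k m : nat)
  (s : T -> S) (theta : T -> Theta)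
  (ubar : S -> Theta -> 'cV[R]_n) (wbar : S -> 'cV[R]_n) (Om : 'M[R]_n) :
  (k < n)%N ->
  posdef Om ->
  sq_integrable P (fun x => ubar (s x) (theta x)) ->
  sq_integrable P (fun x => wbar (s x)) ->
  mx_succ (Varmx P (fun x => wbar (s x)))
          (Emx P (fun x => (ubar (s x) (theta x) - wbar (s x)) *m
                            (ubar (s x) (theta x) - wbar (s x))^T)) ->
  forall (E : 'M[R]_(k, n)) (A : 'M[R]_(m, n)) (a : 'cV[R]_m) (e : S -> 'cV[R]_k),
    fully_explainable E A a ->
    mvec (fun x => e (s x)) ->
    forall f : T -> 'cV[R]_n,
      (forall x, agent_best Om A a E (e (s x)) (ubar (s x) (theta x)) (f x)) ->
      exists (E' : 'M[R]_(k, n)) (e' : S -> 'cV[R]_k),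
        mvec (fun x => e' (s x)) /\
        (exists f' : T -> 'cV[R]_n,
            forall x, agent_best_free Om E' (e' (s x)) (ubar (s x) (theta x)) (f' x)) /\
        (forall f' : T -> 'cV[R]_n,
            (forall x, agent_best_free Om E' (e' (s x)) (ubar (s x) (theta x)) (f' x)) ->
            (welfare P Om f (fun x => wbar (s x)) < welfare P Om f' (fun x => wbar (s x)))%E).
Proof.
move=> kn pdOm U2 W2 VW E A a e [[v0 Av0] [rankA _]] _ f f_best.
have [B [B_inj kerA]] := rank_ker_basis (ltnW kn) rankA.
set U := fun x => ubar (s x) (theta x); set W := fun x => wbar (s x).
have UW2 : sq_integrable P (fun x => U x - W x) := sq_integrableB U2 W2.
have v0W2 : sq_integrable P (fun x => v0 - W x).
  exact: sq_integrableB (sq_integrable_cst P v0) W2.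
have psdQ := lossB_psd B pdOm.
exists (explB Om B), (fun σ => explB Om B *m wbar σ); split; [|split].
- by apply: mvec_mulmx => i; case: (W2 i).
- by exists (fun x => W x + projB Om B *m (U x - W x)) => x; apply/agent_best_freeP.
move=> f' f'_best; set Q := lossB Om B.
have free_loss : welfare P Om f' W = (- (\int[P]_x qform Q (U x - W x))%:E)%E.
  apply: welfareE => [x | | x]; first exact: psdQ.
    exact/Lfun1_integrable/Lfun1_qform.
  exact (quadpay_agent_best_free pdOm B_inj (f'_best x)).
have restricted_loss : (welfare P Om f W <= - (\int[P]_x qform Q (v0 - W x))%:E)%E.
  apply: welfare_le => [x | | x]; first exact: psdQ.
    exact/Lfun1_integrable/Lfun1_qform.
  by case: (f_best x) => Af _; exact (qform_lossB_le_restricted pdOm B_inj _ kerA Av0 Af).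
rewrite free_loss; apply: le_lt_trans restricted_loss _; rewrite lteN2 lte_fin.
exact: Rintegral_qform_lt v0 (lossB_sym B pdOm) psdQ (lossB_neq0 B pdOm kn) W2 UW2 VW.
Qed.
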